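(* Let $(x_0:\ldots:x_4)\in\mathbf{P}^4(\mathbb{Q})$ with $x_0x_1x_2x_3x_4\neq0$. Then there is $w\in\mathbb{Q}$ with $w^2=(-3)\Delta'(x_0,\ldots,x_4)$ (for a, equivalently any, choice of rational homogeneous coordinates) if and only if the point $\iota((x_0:\ldots:x_4))=(1/x_0:\ldots:1/x_4)$ gives a $\mathbb{Q}$-rational point on the discriminantal covering, i.e. there is $w'\in\mathbb{Q}$ with $w'^2=(-3)\Delta(1/x_0,\ldots,1/x_4)$.
   Context: The discriminant is $$\Delta(a_0,\ldots,a_4):=\prod_{i_1,\ldots,i_4\in\{0,1\}}\Big(\sqrt{a_1a_2a_3a_4}+(-1)^{i_1}\sqrt{a_0a_2a_3a_4}+(-1)^{i_2}\sqrt{a_0a_1a_3a_4}+(-1)^{i_3}\sqrt{a_0a_1a_2a_4}+(-1)^{i_4}\sqrt{a_0a_1a_2a_3}\Big)\in\mathbb{Q}[a_0,\ldots,a_4]$$ (degree $32$), and $$\Delta'(x_0,\ldots,x_4):=\prod_{i_1,\ldots,i_4\in\{0,1\}}\big(\sqrt{x_0}+(-1)^{i_1}\sqrt{x_1}+(-1)^{i_2}\sqrt{x_2}+(-1)^{i_3}\sqrt{x_3}+(-1)^{i_4}\sqrt{x_4}\big)\in\mathbb{Q}[x_0,\ldots,x_4]$$ (degree $8$). The discriminantal covering is the double covering of $\mathbf{P}^4_{\mathbb{Q}}$ given by $w^2=-3\Delta(a_0,\ldots,a_4)$. The generalized Cremona transform is the birational map $\iota:\mathbf{P}^4\dashrightarrow\mathbf{P}^4$,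 $(a_0:\ldots:a_4)\mapsto(1/a_0:\ldots:1/a_4)$. *)

(* Delta and Delta' are defined by their defining products of
   square roots, evaluated in the algebraically closed field algC (the value
   does not depend on the choice of square roots, and lies in Q for rational
   arguments). *)
From HB Require Import structures.
From mathcomp Require Import all_boot all_order all_algebra all_field.
Set Implicit Arguments. Unset Strict Implicit. Unset Printing Implicit Defensive.
Import Order.TTheory GRing.Theory Num.Theory.
Local Open Scope ring_scope.

Definition sgnb (b : bool) : algC := (-1) ^+ b.

Definition DeltaP (x0 x1 x2 x3 x4 : algC) : algC :=
  \prod_(i1 : bool) \prod_(i2 : bool) \prod_(i3 : bool) \prod_(i4 : bool)
    (sqrtC x0 + sgnb i1 * sqrtC x1 + sgnb i2 * sqrtC x2
       + sgnb i3 * sqrtC x3 + sgnb i4 * sqrtC x4).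

Definition Delta (a0 a1 a2 a3 a4 : algC) : algC :=
  \prod_(i1 : bool) \prod_(i2 : bool) \prod_(i3 : bool) \prod_(i4 : bool)
    (sqrtC (a1 * a2 * a3 * a4) + sgnb i1 * sqrtC (a0 * a2 * a3 * a4)
       + sgnb i2 * sqrtC (a0 * a1 * a3 * a4) + sgnb i3 * sqrtC (a0 * a1 * a2 * a4)
       + sgnb i4 * sqrtC (a0 * a1 * a2 * a3)).

(* Write P = x0 x1 x2 x3 x4 and u = sqrt(1/P).  Each root sqrt(prod_{j <> k} 1/x_j)
   appearing in Delta(1/x0, ..., 1/x4) equals +-u sqrt(x_k).  The 16-fold product
   over all sign patterns does not see these individual signs, so
   Delta(1/x0, ..., 1/x4) = u^16 Delta'(x0, ..., x4) = P^-8 Delta'(x0, ..., x4).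
   The two sides of the equivalence thus differ by the rational square (P^-4)^2. *)
From HB Require Import structures.
From mathcomp Require Import all_boot all_order all_algebra all_field.
From mathcomp Require Import ring.
Import Order.TTheory GRing.Theory Num.Theory.
Local Open Scope ring_scope.

Lemma sgnbF : sgnb false = 1. Proof. by rewrite /sgnb expr0. Qed.
Lemma sgnbT : sgnb true = -1. Proof. by rewrite /sgnb expr1. Qed.

Lemma sgnb_addb a b : sgnb (a (+) b) = sgnb a * sgnb b.
Proof. by case: a; case: b; rewrite /= ?sgnbT ?sgnbF ?mulrNN ?mulr1 ?mul1r. Qed.

Lemma sgnb_sqr a : sgnb a * sgnb a = 1.
Proof. by case: a; rewrite ?sgnbT ?sgnbF ?mulrNN mulr1. Qed.

Lemma sqrtC_sign (a z : algC) : z ^+ 2 = a -> exists e, sqrtC a = sgnb e * z.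
Proof.
move=> za; have : (sqrtC a - z) * (sqrtC a + z) = 0.
  by rewrite -subr_sqr sqrtCK za subrr.
move/eqP; rewrite mulf_eq0 => /orP[|] /eqP Ez.
  by exists false; rewrite sgnbF mul1r; apply/eqP; rewrite -subr_eq0 Ez.
by exists true; rewrite sgnbT mulN1r; apply/eqP; rewrite -addr_eq0 Ez.
Qed.

Lemma sqrtC_mul_sign (a b : algC) :
  exists e, sqrtC (a * b) = sgnb e * (sqrtC a * sqrtC b).
Proof. by apply: sqrtC_sign; rewrite exprMn !sqrtCK. Qed.

Definition sign_prod (s0 s1 s2 s3 s4 : algC) : algC :=
  \prod_(i1 : bool) \prod_(i2 : bool) \prod_(i3 : bool) \prod_(i4 : bool)
    (s0 + sgnb i1 * s1 + sgnb i2 * s2 + sgnb i3 * s3 + sgnb i4 * s4).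

Lemma prod_sign_patterns_addb (F : bool -> bool -> bool -> bool -> algC) k1 k2 k3 k4 :
  \prod_(i1 : bool) \prod_(i2 : bool) \prod_(i3 : bool) \prod_(i4 : bool)
     F (i1 (+) k1) (i2 (+) k2) (i3 (+) k3) (i4 (+) k4) =
  \prod_(i1 : bool) \prod_(i2 : bool) \prod_(i3 : bool) \prod_(i4 : bool)
     F i1 i2 i3 i4.
Proof. by rewrite !big_bool; case: k1; case: k2; case: k3; case: k4 => /=; ring. Qed.

Lemma prod_sign_patternsZ (c : algC) (F : bool -> bool -> bool -> bool -> algC) :
  \prod_(i1 : bool) \prod_(i2 : bool) \prod_(i3 : bool) \prod_(i4 : bool)
     (c * F i1 i2 i3 i4) =
  c ^+ 16 * \prod_(i1 : bool) \prod_(i2 : bool) \prod_(i3 : bool) \prod_(i4 : bool)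
     F i1 i2 i3 i4.
Proof. by rewrite !big_bool /=; ring. Qed.

Lemma sign_prodZ (c s0 s1 s2 s3 s4 : algC) :
  sign_prod (c * s0) (c * s1) (c * s2) (c * s3) (c * s4) =
  c ^+ 16 * sign_prod s0 s1 s2 s3 s4.
Proof.
rewrite -prod_sign_patternsZ /sign_prod.
by do 4! apply: eq_bigr => ? _; ring.
Qed.

(* Pulling out sgnb e0 turns the sign of s_k into sgnb (i_k (+) e_k (+) e0), and
   (sgnb e0)^16 = 1. *)
Lemma sign_prod_sgnb e0 e1 e2 e3 e4 (s0 s1 s2 s3 s4 : algC) :
  sign_prod (sgnb e0 * s0) (sgnb e1 * s1) (sgnb e2 * s2) (sgnb e3 * s3)
    (sgnb e4 * s4) = sign_prod s0 s1 s2 s3 s4.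
Proof.
pose G j1 j2 j3 j4 :=
  s0 + sgnb j1 * s1 + sgnb j2 * s2 + sgnb j3 * s3 + sgnb j4 * s4.
have factor_sign i1 i2 i3 i4 :
    sgnb e0 * s0 + sgnb i1 * (sgnb e1 * s1) + sgnb i2 * (sgnb e2 * s2)
      + sgnb i3 * (sgnb e3 * s3) + sgnb i4 * (sgnb e4 * s4) =
    sgnb e0 * G (i1 (+) (e1 (+) e0)) (i2 (+) (e2 (+) e0)) (i3 (+) (e3 (+) e0))
      (i4 (+) (e4 (+) e0)).
  by rewrite /G !sgnb_addb; case: e0; rewrite ?sgnbT ?sgnbF; ring.
rewrite /sign_prod.
under eq_bigr => i1 _ do under eq_bigr => i2 _ do under eq_bigr => i3 _ do
  under eq_bigr => i4 _ do rewrite factor_sign.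
rewrite prod_sign_patternsZ (prod_sign_patterns_addb G).
by rewrite (_ : 16 = 2 * 8)%N // exprM expr2 sgnb_sqr expr1n mul1r.
Qed.

Lemma DeltaP_sign_prod (x0 x1 x2 x3 x4 : algC) :
  DeltaP x0 x1 x2 x3 x4 =
  sign_prod (sqrtC x0) (sqrtC x1) (sqrtC x2) (sqrtC x3) (sqrtC x4).
Proof. by []. Qed.

Lemma Delta_sign_prod (a0 a1 a2 a3 a4 : algC) :
  Delta a0 a1 a2 a3 a4 =
  sign_prod (sqrtC (a1 * a2 * a3 * a4)) (sqrtC (a0 * a2 * a3 * a4))
    (sqrtC (a0 * a1 * a3 * a4)) (sqrtC (a0 * a1 * a2 * a4)) (sqrtC (a0 * a1 * a2 * a3)).
Proof. by []. Qed.

Lemma Delta_inv (y0 y1 y2 y3 y4 : algC) :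
  y0 * y1 * y2 * y3 * y4 != 0 ->
  Delta y0^-1 y1^-1 y2^-1 y3^-1 y4^-1 =
  (y0 * y1 * y2 * y3 * y4)^-1 ^+ 8 * DeltaP y0 y1 y2 y3 y4.
Proof.
rewrite !mulf_eq0 !negb_or => /andP[/andP[/andP[/andP[y0P y1P] y2P] y3P] y4P].
set P := y0 * y1 * y2 * y3 * y4.
have cofactor (a b c d e : algC) : a * b * c * d * e = P -> a != 0 ->
    b^-1 * c^-1 * d^-1 * e^-1 = P^-1 * a.
  by move=> <- aP; rewrite !invfM [RHS]mulrC !mulrA mulfV ?mul1r.
rewrite Delta_sign_prod DeltaP_sign_prod.
rewrite (cofactor y0 y1 y2 y3 y4) ?(cofactor y1 y0 y2 y3 y4)
  ?(cofactor y2 y0 y1 y3 y4) ?(cofactor y3 y0 y1 y2 y4) ?(cofactor y4 y0 y1 y2 y3) //;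
  try by rewrite /P; ring.
have [e0 ->] := sqrtC_mul_sign P^-1 y0; have [e1 ->] := sqrtC_mul_sign P^-1 y1.
have [e2 ->] := sqrtC_mul_sign P^-1 y2; have [e3 ->] := sqrtC_mul_sign P^-1 y3.
have [e4 ->] := sqrtC_mul_sign P^-1 y4.
by rewrite sign_prod_sgnb sign_prodZ (_ : 16 = 2 * 8)%N // exprM sqrtCK.
Qed.

Lemma exists_ratr_sqr_scale (F : numFieldType) (q : rat) (a : F) : q != 0 ->
  (exists w : rat, ratr w ^+ 2 = a) <-> (exists w : rat, ratr w ^+ 2 = ratr q ^+ 2 * a).
Proof.
move=> qP; split=> -[w wa].
  by exists (q * w); rewrite rmorphM exprMn wa.
exists (q^-1 * w); rewrite rmorphM exprMn wa fmorphV mulrA -exprMn mulVf ?expr1n ?mul1r //.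
by rewrite fmorph_eq0.
Qed.

Theorem mainTheorem6 (x0 x1 x2 x3 x4 : rat) :
  x0 * x1 * x2 * x3 * x4 != 0 ->
  ((exists w : rat, (ratr w : algC) ^+ 2 =
      -3 * DeltaP (ratr x0) (ratr x1) (ratr x2) (ratr x3) (ratr x4))
   <->
   (exists w' : rat, (ratr w' : algC) ^+ 2 =
      -3 * Delta (ratr x0^-1) (ratr x1^-1) (ratr x2^-1) (ratr x3^-1) (ratr x4^-1))).
Proof.
move=> xP; set P := x0 * x1 * x2 * x3 * x4.
have PP : (ratr x0 : algC) * ratr x1 * ratr x2 * ratr x3 * ratr x4 != 0.
  by rewrite -!rmorphM fmorph_eq0.
have P4P : P ^- 4 != 0 by rewrite invr_eq0 expf_eq0.
rewrite !fmorphV Delta_inv // (@exists_ratr_sqr_scale _ _ _ P4P).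
suff -> : (ratr (P ^- 4) : algC) ^+ 2 =
    (ratr x0 * ratr x1 * ratr x2 * ratr x3 * ratr x4)^-1 ^+ 8.
  by rewrite mulrCA.
by rewrite -!rmorphM -fmorphV -!rmorphXn -exprVn -exprM.
Qed.
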